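(* Let $\widehat\pi$ be the policy computed by ALG-CE under the good event $E$. Then $$\sum_{i\in[k]}P_{(\widehat\pi(0),i)}\mathbb{E}[R_i\mid\widehat\pi(i)]\ge\sum_{i\in[k]}\widehat P_{(\widehat\pi(0),i)}\widehat{\mathcal{R}}_{(\widehat\pi(i),i)}-O\left(\sqrt{\max\left\{\widehat\lambda,\frac{m_0}{p_+}\right\}\frac{\log(NT)}{T}}\right),$$ where $\widehat\lambda=\|\widehat P\widehat M^{1/2}(\widehat P^\top\widehat f^* )^{\circ-1/2}\|_\infty^2$.
   Context: Two-stage causal MDP. Start state $0$, intermediate states $[k]$, terminal state. At each state $i\in\{0,\dots,k\}$: independent Bernoulli variables $X^i_1,\dots,X^i_n$, $q^i_j=\mathbb{P}\{X^i_j=1\}$ unknown; atomic interventions $\mathcal{I}_i=\{do()\}\cup\{do(X^i_j=0),do(X^i_j=1):j\in[n]\}$, $N=2n+1$ ($do(X^i_j=x)$ sets $X^i_j=x$, other variables drawn independently). Performing $a\in\mathcal{I}_0$ at state $0$ leads to $i\in[k]$ with unknown probability $P_{(a,i)}$ (depending stochastically on the realized $X^0$-values); $P\in\mathbb{R}^{N\times k}$, $p_+=\min\{P_{(a,i)}>0\}$. At state $i\in[k]$, after an intervention all $X^i_j$ and a reward $R_i\in\{0,1\}$ (law depending on the $X^i$-values) are observed; $\mathbb{E}[R_i\mid a]$ is the expected reward under $a\in\mathcal{I}_i$. Causal parameters: with $\bar q^i_j=\min(q^i_j,1-q^i_j)$ sorted as $\bar q^i_{(1)}\le\dots\le\bar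 q^i_{(n)}$, $m_i=\max\{j:\bar q^i_{(j)}<1/j\}$; $\mathcal{I}_{m_i}$ is the set of interventions setting a variable with $\bar q^i_{(j)}<1/j$ to its less likely value; $M=\mathrm{diag}(m_1,\dots,m_k)$. Frequency vectors: $f\in\mathbb{R}^N$, $f\ge0$, $\sum f_a=1$; $x^{\circ-1/2}$ is entrywise $x_i^{-1/2}$. Algorithm ALG-CE with budget $T$ (estimates are empirical frequencies/means). Phase 1 ($T/3$ rounds): $T/6$ rounds of $do()$ at state $0$, giving estimates of $q^0_j$, $\widehat m_0$, $\mathcal{I}_{m_0}$, and $\widehat P_{(a,i)}$ for $a\notin\mathcal{I}_{m_0}$ (frequency of reaching $i$ among rounds whose $X^0$-values agree with $a$); then each $a\in\mathcal{I}_{m_0}$ is performed $T/(6|\mathcal{I}_{m_0}|)$ times to get $\widehat P_{(a,i)}$. Phase 2: $\tilde f\in\arg\max_f\min_i(\widehat P^\top f)_i$. Phase 3 ($T/3$ rounds): each $a\in\mathcal{I}_0$ performed $\frac12(\tilde f(a)+\frac1N)\frac T3$ times with $do()$ at the reached state, giving $\widehat m_i$, $\widehat M=\mathrm{diag}(\widehat m_1,\dots,\widehat m_k)$. Phase 4: $\widehat f^*\in\arg\min_f\|\widehat P\widehat M^{1/2}(\widehat P^\top f)^{\circ-1/2}\|_\infty$. Phase 5 ($T/3$ rounds): with $h(a)=\frac13(\widehat f^*(a)+\tilde f(a)+\frac1N)$, each $a$ performed $h(a)T/6$ times with $do()$ at the reached state (estimating $\mathcal{I}_{m_i}$ and $\widehat{\mathcal{R}}_{(b,i)}$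 for $b\notin\mathcal{I}_{m_i}$ from rounds whose $X^i$-values agree with $b$), then $h(a)T/6$ times with round-robin over $b\in\mathcal{I}_{m_i}$ at the reached state $i$ (estimating $\widehat{\mathcal{R}}_{(b,i)}$ for $b\in\mathcal{I}_{m_i}$). Output $\widehat\pi(i)\in\arg\max_b\widehat{\mathcal{R}}_{(b,i)}$, $\widehat\pi(0)\in\arg\max_a\sum_i\widehat P_{(a,i)}\widehat{\mathcal{R}}_{(\widehat\pi(i),i)}$. Good event $E=E_1\cap\dots\cap E_5$: ($E_1$) for every $a\in\mathcal{I}_0$, the transition estimates formed in each of Phases 1, 3, 5 satisfy $\sum_i|\widehat P_{(a,i)}-P_{(a,i)}|\le p_+/3$; ($E_2$) $\widehat m_0\in[\frac23m_0,2m_0]$; ($E_3$) $\widehat m_i\in[\frac23m_i,2m_i]$ for all $i\in[k]$ (for the estimates in Phases 3 and 5); ($E_4$) for all $a\in\mathcal{I}_0$, the Phase 1 estimates satisfy $\sum_i|\widehat P_{(a,i)}-P_{(a,i)}|\le\eta'$ with $\eta'=\sqrt{\frac{150m_0}{Tp_+}\log\frac{3T}{k}}$; ($E_5$) $|\mathbb{E}[R_i\mid a]-\widehat{\mathcal{R}}_{(a,i)}|\le\widehat\eta_i$ for all $i\in[k]$, $a\in\mathcal{I}_i$, with $\widehat\eta_i=\sqrt{\frac{27\widehat m_i}{T(\widehat P^\top\widehat f^* )_i}\log(2TN)}$. Here $\widehat P$ and $\widehat M$ denote the Phase 1 and Phase 3 estimates. *)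

From HB Require Import structures.
From mathcomp Require Import all_boot all_order all_algebra.
From mathcomp Require Import all_classical all_reals all_analysis.
Set Implicit Arguments. Unset Strict Implicit. Unset Printing Implicit Defensive.
Import Order.TTheory GRing.Theory Num.Theory.
Local Open Scope ring_scope.

Section CausalMDP.
Variable R : realType.

(* Atomic interventions on n binary variables:
   None = do(),  Some (j, b) = do(X_j = b).  Its cardinality is N = 2n+1. *)
Definition interv (n : nat) : finType := option ('I_n * bool).

Definition assign (n : nat) : finType := {ffun 'I_n -> bool}.

Definition bern (p : R) (b : bool) : R := if b then p else 1 - p.

(* Probability of the realization x of (X_1..X_n) under intervention a, the
   variables being independent Bernoulli(q j) except the intervened one. *)
Definition iweight (n : nat) (q : 'I_n -> R) (a : interv n) (x : assign n) : R :=
  \prod_(j < n)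
    match a with
    | Some (j0, b) => if j == j0 then (if x j == b then 1 else 0) else bern (q j) (x j)
    | None => bern (q j) (x j)
    end.

(* E[R | a] when P(R = 1 | X = x) = r x. *)
Definition exp_reward (n : nat) (q : 'I_n -> R) (r : assign n -> R) (a : interv n) : R :=
  \sum_(x : assign n) iweight q a x * r x.

(* P_{(a,i)} when P(next state = i | X^0 = x) = g x i. *)
Definition trans (n k : nat) (q0 : 'I_n -> R) (g : assign n -> 'I_k -> R)
    (a : interv n) (i : 'I_k) : R :=
  \sum_(x : assign n) iweight q0 a x * g x i.

Definition qbar (p : R) : R := Num.min p (1 - p).

Definition sorted_qbar (n : nat) (q : 'I_n -> R) : seq R :=
  sort <=%R [seq qbar (q j) | j <- enum 'I_n].

(* m = max { j in [n] : qbar_(j) < 1/j }  (j is 1-based; index j0 = j - 1) *)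
Definition mpar (n : nat) (q : 'I_n -> R) : nat :=
  \max_(j0 < n | nth 0 (sorted_qbar q) j0 < (j0.+1%:R)^-1) j0.+1.

(* p_+ = min { P_{(a,i)} : P_{(a,i)} > 0 } (all entries are <= 1). *)
Definition pplus (n k : nat) (P : interv n -> 'I_k -> R) : R :=
  \big[Num.min/1]_(ai : interv n * 'I_k | 0 < P ai.1 ai.2) P ai.1 ai.2.

Definition simplex (I : finType) (f : I -> R) : Prop :=
  (forall a, 0 <= f a) /\ \sum_a f a = 1.

Definition prob01 (p : R) : Prop := 0 <= p <= 1.

Definition PTf (n k : nat) (P : interv n -> 'I_k -> R) (f : interv n -> R) (i : 'I_k) : R :=
  \sum_(a : interv n) P a i * f a.

(* || P M^{1/2} (P^T f)^{o -1/2} ||_oo  with M = diag(m_1..m_k) *)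
Definition ce_obj (n k : nat) (P : interv n -> 'I_k -> R) (m : 'I_k -> nat)
    (f : interv n -> R) : R :=
  \big[Num.max/0]_(a : interv n)
     `| \sum_(i < k) P a i * Num.sqrt (m i)%:R * (Num.sqrt (PTf P f i))^-1 |.

Definition l1dist (n k : nat) (Ph P : interv n -> 'I_k -> R) (a : interv n) : R :=
  \sum_(i < k) `| Ph a i - P a i |.

End CausalMDP.

From HB Require Import structures.
From mathcomp Require Import all_boot all_order all_algebra.
From mathcomp Require Import all_classical all_reals all_analysis.
From mathcomp Require Import ring lra zify.
Set Implicit Arguments. Unset Strict Implicit. Unset Printing Implicit Defensive.
Import Order.TTheory GRing.Theory Num.Theory.
Local Open Scope ring_scope.

(* The value gap of the output policy splits as
     sum_i (P - Phat)_(pi0,i) E[R_i | pi(i)] + sum_i Phat_(pi0,i) (E[R_i | pi(i)] - Rhat_(pi(i),i)).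
   Rewards lie in [0, 1], so by E4 the first sum is at least -eta'.  By E5 the i-th
   summand of the second sum is at least
     -sqrt(27 log(2TN) / T) * Phat_(pi0,i) sqrt(mhat_i / (Phat^T fhat)_i),
   and these weights sum to the pi0-row of the Phase 4 objective, which is at most
   sqrt(lambdahat).  Since log(3T/k) <= log(NT) and log(2TN) <= 2 log(NT), both radii
   are at most 13 sqrt(max(lambdahat, m0/p+) log(NT) / T), as 13^2 dominates both
   150 and 2 * 27. *)

Section ValueGap.
Variable R : realType.

Lemma iweight_ge0 n (q : 'I_n -> R) a x :
  (forall j, prob01 (q j)) -> 0 <= iweight q a x.
Proof.
move=> qP; apply: prodr_ge0 => j _.
have bern_ge0 : 0 <= bern (q j) (x j).
  by have /andP[q_ge0 q_le1] := qP j; rewrite /bern; case: (x j); lra.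
by case: a => [[j0 b]|] //; case: (j == j0) => //; case: (x j == b).
Qed.

Lemma iweight_sum1 n (q : 'I_n -> R) a : \sum_(x : assign n) iweight q a x = 1.
Proof.
pose w j b : R := match a with
  | Some (j0, b0) => if j == j0 then (if b == b0 then 1 else 0) else bern (q j) b
  | None => bern (q j) b
  end.
rewrite (_ : \sum_x iweight q a x = \sum_(x : assign n) \prod_(j < n) w j (x j)) //.
rewrite -bigA_distr_bigA big1 // => j _; rewrite big_bool /w /bern {w}.
case: a => [[j0 b0]|] /=; last lra.
by case: (j == j0); [case: b0; rewrite /= ?addr0 ?add0r | lra].
Qed.

Lemma exp_reward_norm_le1 n (q : 'I_n -> R) (r : assign n -> R) b :
  (forall j, prob01 (q j)) -> (forall x, prob01 (r x)) -> `|exp_reward q r b| <= 1.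
Proof.
move=> qP rP; rewrite /exp_reward -(iweight_sum1 q b) ger0_norm.
  apply: ler_sum => x _; rewrite ler_piMr ?iweight_ge0 //.
  by have /andP[] := rP x.
apply: sumr_ge0 => x _; rewrite mulr_ge0 ?iweight_ge0 //.
by have /andP[] := rP x.
Qed.

Lemma pplus_gt0 n k (P : interv n -> 'I_k -> R) : 0 < pplus P.
Proof.
by apply: (big_ind (fun x => 0 < x)) => // x y x_gt0 y_gt0; rewrite lt_min x_gt0.
Qed.

Lemma ce_obj_ge0 n k (P : interv n -> 'I_k -> R) m f : 0 <= ce_obj P m f.
Proof.
by apply: (big_ind (fun x => 0 <= x)) => // x y x_ge0 _; rewrite le_max x_ge0.
Qed.

Lemma ce_obj_ge_row n k (P : interv n -> 'I_k -> R) m f a :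
  \sum_(i < k) P a i * Num.sqrt (m i)%:R * (Num.sqrt (PTf P f i))^-1 <= ce_obj P m f.
Proof. exact: le_trans (ler_norm _) (le_bigmax _ _ a). Qed.

Lemma oppr_sum_le_sum (I : finType) (e w : I -> R) :
  (forall i, `|e i| <= w i) -> - \sum_i w i <= \sum_i e i.
Proof.
move=> e_le; rewrite lerNl; apply: le_trans (ler_norm _) _; rewrite normrN.
by apply: le_trans (ler_norm_sum _ _ _) _; apply: ler_sum => i _.
Qed.

Lemma oppr_l1dist_le_sum n k (P Ph : interv n -> 'I_k -> R) (v : 'I_k -> R) a :
  (forall i, `|v i| <= 1) -> - l1dist Ph P a <= \sum_i (P a i - Ph a i) * v i.
Proof.
move=> v_le1; apply: oppr_sum_le_sum => i.
by rewrite normrM distrC ler_piMr.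
Qed.

Lemma oppr_ce_obj_le_sum n k (Ph : interv n -> 'I_k -> R) (m : 'I_k -> nat) f a
    (e : 'I_k -> R) (c : R) :
  0 <= c -> (forall i, 0 <= Ph a i) ->
  (forall i, `|e i| <= c * (Num.sqrt (m i)%:R / Num.sqrt (PTf Ph f i))) ->
  - (c * ce_obj Ph m f) <= \sum_i Ph a i * e i.
Proof.
move=> c_ge0 Ph_ge0 e_le.
pose w i := c * (Ph a i * Num.sqrt (m i)%:R * (Num.sqrt (PTf Ph f i))^-1).
apply: le_trans _ (oppr_sum_le_sum (w := w) _) => [|i].
  by rewrite -mulr_sumr lerN2 ler_wpM2l ?ce_obj_ge_row.
by rewrite normrM ger0_norm // /w -!mulrA mulrCA ler_wpM2l.
Qed.

Lemma sqrt_le_mulr (c x y : R) :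
  0 <= c -> x <= c ^+ 2 * y -> Num.sqrt x <= c * Num.sqrt y.
Proof.
move=> c_ge0 x_le; apply: le_trans (ler_wsqrtr x_le) _.
by rewrite sqrtrM ?sqr_ge0 // sqrtr_sqr ger0_norm.
Qed.

Lemma sqrt_radius_split (a b l t p : R) : 0 <= b -> 0 <= p ->
  Num.sqrt (a * b / (t * p) * l) = Num.sqrt (a * l / t) * (Num.sqrt b / Num.sqrt p).
Proof.
move=> b_ge0 p_ge0.
rewrite (_ : a * b / (t * p) * l = b * p^-1 * (a * l / t)); last by rewrite invfM; ring.
by rewrite sqrtrM ?divr_ge0 // sqrtrM // sqrtrV // mulrC.
Qed.

Lemma ln_sample_le (k N T : R) : 1 <= k -> 3 <= N -> 0 < T ->
  ln (3 * T / k) <= ln (N * T).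
Proof.
move=> k_ge1 N_ge3 T_gt0.
rewrite ler_ln ?posrE ?divr_gt0 ?mulr_gt0 ?ler_pdivrMr //; try lra.
have : 3 * T <= N * T by rewrite ler_wpM2r; lra.
nra.
Qed.

Lemma ln_conf_le (N T : R) : 3 <= N -> 1 <= T -> ln (2 * T * N) <= 2 * ln (N * T).
Proof.
move=> N_ge3 T_ge1; have NT_ge3 : 3 <= N * T by nra.
by rewrite [2 * ln _]mulr_natl -lnXn ?ler_ln ?posrE ?expr2; nra.
Qed.

Lemma transition_radius_le (k N T m0 pp lam : R) :
  1 <= k -> 3 <= N -> 1 <= T -> 0 <= m0 -> 0 < pp ->
  Num.sqrt (150 * m0 / (T * pp) * ln (3 * T / k))
  <= 13 * Num.sqrt (Num.max lam (m0 / pp) * ln (N * T) / T).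
Proof.
move=> k_ge1 N_ge3 T_ge1 m0_ge0 pp_gt0; apply: sqrt_le_mulr => //.
set M := Num.max _ _; set L := ln (N * T).
have A_ge0 : 0 <= m0 / pp by rewrite divr_ge0 // ltW.
have A_le : m0 / pp <= M by rewrite le_max lexx orbT.
have L_ge0 : 0 <= L by apply: ln_ge0; nra.
have ln_le : ln (3 * T / k) <= L by apply: ln_sample_le; lra.
have AL_le : m0 / pp * ln (3 * T / k) <= M * L.
  exact: le_trans (ler_wpM2l A_ge0 ln_le) (ler_wpM2r L_ge0 A_le).
rewrite invfM (_ : 150 * m0 * (T^-1 * pp^-1) * _ = 150 * (m0 / pp * ln (3 * T / k)) / T);
  last by ring.
have ML_ge0 : 0 <= M * L by rewrite mulr_ge0 // (le_trans A_ge0 A_le).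
have Tinv_ge0 : 0 <= T^-1 by rewrite invr_ge0; lra.
nra.
Qed.

Lemma estimation_radius_le (N T ce A : R) : 3 <= N -> 1 <= T -> 0 <= ce ->
  Num.sqrt (27 * ln (2 * T * N) / T) * ce
  <= 13 * Num.sqrt (Num.max (ce ^+ 2) A * ln (N * T) / T).
Proof.
move=> N_ge3 T_ge1 ce_ge0.
rewrite -[ce in X in X <= _]ger0_norm // -sqrtr_sqr mulrC -sqrtrM ?sqr_ge0 //.
apply: sqrt_le_mulr => //.
set M := Num.max _ _; set L := ln (N * T).
have ce_le : ce ^+ 2 <= M by rewrite le_max lexx.
have L_ge0 : 0 <= L by apply: ln_ge0; nra.
have ML_ge0 : 0 <= M * L by rewrite mulr_ge0 // (le_trans (sqr_ge0 ce) ce_le).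
have cel_le : ce ^+ 2 * ln (2 * T * N) <= M * (2 * L).
  apply: le_trans (ler_wpM2l (sqr_ge0 ce) (ln_conf_le N_ge3 T_ge1)) _.
  by rewrite ler_wpM2r // mulr_ge0.
have Tinv_ge0 : 0 <= T^-1 by rewrite invr_ge0; lra.
nra.
Qed.

End ValueGap.

Theorem lemma2 (R : realType) :
  exists C : R, 0 < C /\
  forall (n k T : nat),
    (0 < n)%N -> (0 < k)%N -> (0 < T)%N ->
  (* ---- the instance ---- *)
  forall (q0 : 'I_n -> R) (g : assign n -> 'I_k -> R)
         (q : 'I_k -> 'I_n -> R) (r : 'I_k -> assign n -> R),
    (forall j, prob01 (q0 j)) ->
    (forall x, simplex (g x)) ->
    (forall i j, prob01 (q i j)) ->
    (forall i x, prob01 (r i x)) ->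
  let P := trans q0 g in
  let ER := fun (i : 'I_k) (b : interv n) => exp_reward (q i) (r i) b in
  let m0 := mpar q0 in
  let m := fun i => mpar (q i) in
  let pp := pplus P in
  let N := (2 * n + 1)%N in
  (* ---- realized outputs of ALG-CE ---- *)
  forall (q0h : 'I_n -> R)                       (* Phase 1 estimates of q^0 *)
         (Ph1 Ph3 Ph5 : interv n -> 'I_k -> R)    (* transition estimates, Phases 1,3,5 *)
         (q3h q5h : 'I_k -> 'I_n -> R)           (* estimates of q^i, Phases 3,5 *)
         (ft fs : interv n -> R)                 (* f~ and f^* *)
         (Rh : interv n -> 'I_k -> R)            (* Rhat_{(b,i)} *)
         (pi0 : interv n) (pi : 'I_k -> interv n),
    (forall j, prob01 (q0h j)) ->
    (forall i j, prob01 (q3h i j)) ->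
    (forall i j, prob01 (q5h i j)) ->
    (forall a, simplex (Ph1 a)) ->
    (forall a, simplex (Ph3 a)) ->
    (forall a, simplex (Ph5 a)) ->
    (forall b i, prob01 (Rh b i)) ->
  let m0h := mpar q0h in
  let mh := fun i => mpar (q3h i) in
  let mh5 := fun i => mpar (q5h i) in
  (* Phase 2: f~ in argmax_f min_i (Phat^T f)_i *)
    simplex ft ->
    (forall f, simplex f -> forall j, exists i, PTf Ph1 f i <= PTf Ph1 ft j) ->
  (* Phase 4: f^* in argmin_f || Phat Mhat^{1/2} (Phat^T f)^{o-1/2} ||_oo *)
    simplex fs ->
    (forall i, 0 < PTf Ph1 fs i) ->
    (forall f, simplex f -> (forall i, 0 < PTf Ph1 f i) ->
       ce_obj Ph1 mh fs <= ce_obj Ph1 mh f) ->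
  (* output policy *)
    (forall i b, Rh b i <= Rh (pi i) i) ->
    (forall a, \sum_(i < k) Ph1 a i * Rh (pi i) i
               <= \sum_(i < k) Ph1 pi0 i * Rh (pi i) i) ->
  (* ---- good event E ---- *)
  (* E1 *)
    (forall a, l1dist Ph1 P a <= pp / 3) ->
    (forall a, l1dist Ph3 P a <= pp / 3) ->
    (forall a, l1dist Ph5 P a <= pp / 3) ->
  (* E2 *)
    (2 / 3 : R) * m0%:R <= (m0h%:R : R) <= 2 * m0%:R ->
  (* E3 *)
    (forall i, (2 / 3 : R) * (m i)%:R <= ((mh i)%:R : R) <= 2 * (m i)%:R) ->
    (forall i, (2 / 3 : R) * (m i)%:R <= ((mh5 i)%:R : R) <= 2 * (m i)%:R) ->
  (* E4 *)
    (forall a, l1dist Ph1 P a <=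
        Num.sqrt (150%:R * m0%:R / (T%:R * pp) * ln (3%:R * T%:R / k%:R))) ->
  (* E5 *)
    (forall i b, `| ER i b - Rh b i | <=
        Num.sqrt (27%:R * (mh i)%:R / (T%:R * PTf Ph1 fs i) * ln (2%:R * T%:R * N%:R))) ->
  (* ---- conclusion ---- *)
  let lamh := (ce_obj Ph1 mh fs) ^+ 2 in
    \sum_(i < k) P pi0 i * ER i (pi i)
      >= \sum_(i < k) Ph1 pi0 i * Rh (pi i) i
         - C * Num.sqrt (Num.max lamh (m0%:R / pp) * ln (N%:R * T%:R) / T%:R).
Proof.
exists 26; split => // n k T n_gt0 k_gt0 T_gt0 q0 g q r _ _ qP rP P ER m0 m pp N
  q0h Ph1 Ph3 Ph5 q3h q5h ft fs Rh pi0 pi _ _ _ Ph1P _ _ _ m0h mh mh5 _ _ _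
  fs_pos _ _ _ _ _ _ _ _ _ E4 E5; cbv zeta.
have k_ge1 : (1 : R) <= k%:R by rewrite ler1n.
have T_ge1 : (1 : R) <= T%:R by rewrite ler1n.
have N_ge3 : (3 : R) <= N%:R by rewrite (ler_nat _ 3) /N; lia.
set rate := Num.sqrt _.
have transition_err : - (13 * rate) <= \sum_i (P pi0 i - Ph1 pi0 i) * ER i (pi i).
  have ER_le1 i : `|ER i (pi i)| <= 1 by apply: exp_reward_norm_le1.
  apply: le_trans _ (oppr_l1dist_le_sum P Ph1 pi0 ER_le1).
  by rewrite lerN2 (le_trans (E4 pi0)) ?transition_radius_le ?pplus_gt0.
have estimation_err : - (13 * rate) <= \sum_i Ph1 pi0 i * (ER i (pi i) - Rh (pi i) i).
  pose c : R := Num.sqrt (27 * ln (2 * T%:R * N%:R) / T%:R).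
  have E5c i : `|ER i (pi i) - Rh (pi i) i|
      <= c * (Num.sqrt (mh i)%:R / Num.sqrt (PTf Ph1 fs i)).
    by rewrite /c -sqrt_radius_split ?(ltW (fs_pos i)).
  apply: le_trans _ (oppr_ce_obj_le_sum (sqrtr_ge0 _) (proj1 (Ph1P pi0)) E5c).
  by rewrite lerN2 estimation_radius_le ?ce_obj_ge0.
have value_gap : \sum_i P pi0 i * ER i (pi i) - \sum_i Ph1 pi0 i * Rh (pi i) i
    = \sum_i (P pi0 i - Ph1 pi0 i) * ER i (pi i)
      + \sum_i Ph1 pi0 i * (ER i (pi i) - Rh (pi i) i).
  by rewrite -sumrB -big_split; apply: eq_bigr => i _ /=; ring.
lra.
Qed.
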